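(* Let $\Sigma$ be a smooth surface in $\mathbb{R}^3$ and let $\Gamma$ be a line of curvature on $\Sigma$ whose geodesic curvature on $\Sigma$ is a constant $c\neq 0$. If the torsion of $\Gamma$, regarded as a space curve in $\mathbb{R}^3$, is identically zero, then $\Gamma$ is a part of a circle, and $\Sigma$ is orthogonal to a sphere of radius $\frac{1}{|c|}$ along $\Gamma$.
   Context: A line of curvature on $\Sigma$ is a curve whose tangent vector is at every point a principal direction of $\Sigma$. *)

From Stdlib Require Import Reals.
From Coquelicot Require Import Coquelicot.
Open Scope R_scope.

Definition V3 := (R * R * R)%type.
Definition mk3 (x y z : R) : V3 := (x, y, z).
Definition vx (a : V3) : R := fst (fst a).
Definition vy (a : V3) : R := snd (fst a).
Definition vz (a : V3) : R := snd a.
Definition vzero : V3 := mk3 0 0 0.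
Definition vadd (a b : V3) : V3 := mk3 (vx a + vx b) (vy a + vy b) (vz a + vz b).
Definition vsub (a b : V3) : V3 := mk3 (vx a - vx b) (vy a - vy b) (vz a - vz b).
Definition vscale (k : R) (a : V3) : V3 := mk3 (k * vx a) (k * vy a) (k * vz a).
Definition dot (a b : V3) : R := vx a * vx b + vy a * vy b + vz a * vz b.
Definition cross (a b : V3) : V3 :=
  mk3 (vy a * vz b - vz a * vy b) (vz a * vx b - vx a * vz b) (vx a * vy b - vy a * vx b).
Definition vnorm (a : V3) : R := sqrt (dot a a).
Definition det3 (a b c : V3) : R := dot a (cross b c).

Definition vD (f : R -> V3) (t : R) : V3 :=
  mk3 (Derive (fun s => vx (f s)) t) (Derive (fun s => vy (f s)) t) (Derive (fun s => vz (f s)) t).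
Definition vDn (n : nat) (f : R -> V3) (t : R) : V3 :=
  mk3 (Derive_n (fun s => vx (f s)) n t) (Derive_n (fun s => vy (f s)) n t)
      (Derive_n (fun s => vz (f s)) n t).

Definition smooth1 (I : R -> Prop) (f : R -> R) : Prop :=
  forall (n : nat) (t : R), I t -> ex_derive_n f n t.

Fixpoint C2k (k : nat) (U : R -> R -> Prop) (f : R -> R -> R) : Prop :=
  (forall u v, U u v -> continuity_2d_pt f u v) /\
  match k with
  | O => True
  | S k' =>
      (forall u v, U u v -> ex_derive (fun s => f s v) u /\ ex_derive (fun s => f u s) v) /\
      C2k k' U (fun u v => Derive (fun s => f s v) u) /\
      C2k k' U (fun u v => Derive (fun s => f u s) v)
  end.
Definition smooth2 (U : R -> R -> Prop) (f : R -> R -> R) : Prop := forall k, C2k k U f.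

Definition open2 (U : R -> R -> Prop) : Prop :=
  forall u v, U u v -> exists e, 0 < e /\
    forall u' v', Rabs (u' - u) < e -> Rabs (v' - v) < e -> U u' v'.

Definition Xu (X : R -> R -> V3) (u v : R) : V3 := vD (fun s => X s v) u.
Definition Xv (X : R -> R -> V3) (u v : R) : V3 := vD (fun s => X u s) v.

Definition regular_surface (U : R -> R -> Prop) (X : R -> R -> V3) : Prop :=
  open2 U /\
  smooth2 U (fun u v => vx (X u v)) /\ smooth2 U (fun u v => vy (X u v)) /\
  smooth2 U (fun u v => vz (X u v)) /\
  (forall u v, U u v -> cross (Xu X u v) (Xv X u v) <> vzero).

Definition Nrm (X : R -> R -> V3) (u v : R) : V3 :=
  vscale (/ vnorm (cross (Xu X u v) (Xv X u v))) (cross (Xu X u v) (Xv X u v)).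
Definition Nu (X : R -> R -> V3) (u v : R) : V3 := vD (fun s => Nrm X s v) u.
Definition Nv (X : R -> R -> V3) (u v : R) : V3 := vD (fun s => Nrm X u s) v.

(* w is a principal direction at X(u,v): a nonzero tangent vector which is an
   eigenvector of the shape operator S = -dN. *)
Definition principal_direction (X : R -> R -> V3) (u v : R) (w : V3) : Prop :=
  w <> vzero /\
  exists a b k : R,
    w = vadd (vscale a (Xu X u v)) (vscale b (Xv X u v)) /\
    vadd (vscale a (Nu X u v)) (vscale b (Nv X u v)) = vscale (- k) w.

Definition inI (t0 t1 t : R) : Prop := t0 < t /\ t < t1.

Definition curve_on (U : R -> R -> Prop) (X : R -> R -> V3) (t0 t1 : R) (u v : R -> R) : Prop :=
  t0 < t1 /\ smooth1 (inI t0 t1) u /\ smooth1 (inI t0 t1) v /\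
  (forall t, inI t0 t1 t -> U (u t) (v t)).

Definition gam (X : R -> R -> V3) (u v : R -> R) (t : R) : V3 := X (u t) (v t).

Definition line_of_curvature (X : R -> R -> V3) (t0 t1 : R) (u v : R -> R) : Prop :=
  forall t, inI t0 t1 t -> principal_direction X (u t) (v t) (vD (gam X u v) t).

Definition geod_curv (X : R -> R -> V3) (u v : R -> R) (t : R) : R :=
  dot (vDn 2 (gam X u v) t) (cross (Nrm X (u t) (v t)) (vDn 1 (gam X u v) t))
  / (vnorm (vDn 1 (gam X u v) t)) ^ 3.

Definition torsion (g : R -> V3) (t : R) : R :=
  det3 (vDn 1 g t) (vDn 2 g t) (vDn 3 g t) / (vnorm (cross (vDn 1 g t) (vDn 2 g t))) ^ 2.

From Stdlib Require Import Reals Lra Lia.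
From Coquelicot Require Import Coquelicot.
Open Scope R_scope.

(* Along a line of curvature Rodrigues' formula gives [N' = -k gamma'].  Writing
   [T] for the unit tangent, [N' x T = 0] and [N x T' = -c gamma'] by the definition
   of the geodesic curvature, so [c gamma + N x T] is constant, say [c q].  Then
   [gamma - q = -(N x T) / c] has length [1/|c|] and is tangent to the surface: the
   curve lies on the sphere of centre [q] and radius [1/|c|], which meets the surface
   orthogonally along it.  Since [c <> 0], [gamma' x gamma''] never vanishes, so zero
   torsion makes the binormal constant; the curve is then planar, hence contained in
   the circle cut from that sphere by its plane. *)

(** * Chain rule for functions of two variables *)

Lemma C2k_S U k : forall f, C2k (S k) U f -> C2k k U f.
Proof.
  induction k as [|k IH]; intros f [Hcont Hk].
  - split; [exact Hcont | exact I].
  - destruct Hk as [Hex [Hu Hv]].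
    split; [exact Hcont|]. split; [exact Hex|]. split; apply IH; assumption.
Qed.

Lemma C2k_le U k m f : (m <= k)%nat -> C2k k U f -> C2k m U f.
Proof. induction 1; auto using C2k_S. Qed.

Lemma C2k_ex_diff_n U k : forall f a b, C2k k U f -> U a b -> ex_diff_n f k a b.
Proof.
  induction k as [|k IH]; intros f a b [Hcont Hk] Hab.
  - split; [exact (Hcont a b Hab) | exact I].
  - destruct Hk as [Hex [Hu Hv]]. destruct (Hex a b Hab) as [Exu Exv].
    split; [exact (Hcont a b Hab)|]. repeat split; auto.
Qed.

Lemma open2_locally_2d U a b : open2 U -> U a b -> locally_2d U a b.
Proof.
  intros HU Hab. destruct (HU a b Hab) as [e [He H]].
  exists (mkposreal e He). exact H.
Qed.

Lemma DL_pol_1 f a b dx dy : DL_pol 1 f a b dx dy =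
  f a b + Derive (fun s => f s b) a * dx + Derive (fun s => f a s) b * dy.
Proof. unfold DL_pol, differential, partial_derive, Binomial.C; simpl. field. Qed.

(* Taylor-Lagrange: the first-order remainder of a [C^2] function is
   [O(Rmax |u - a| |v - b| ^ 2)]. *)
Lemma C2k_differentiable_pt_lim U f a b : open2 U -> C2k 2 U f -> U a b ->
  differentiable_pt_lim f a b (Derive (fun s => f s b) a) (Derive (fun s => f a s) b).
Proof.
  intros HU Hf Hab eps.
  assert (Hdiff : locally_2d (fun u v => ex_diff_n f 2 u v) a b).
  { apply locally_2d_impl with U; [|exact (open2_locally_2d U a b HU Hab)].
    apply locally_2d_forall. intros u v Huv. exact (C2k_ex_diff_n U 2 f u v Hf Huv). }
  destruct (Taylor_Lagrange_2d f 1 a b Hdiff) as [D [d0 HD]].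
  set (K := Rabs D + 1).
  assert (HK : 0 < K) by (unfold K; pose proof (Rabs_pos D); lra).
  assert (HDK : D <= K) by (unfold K; pose proof (Rle_abs D); lra).
  assert (Hd : 0 < Rmin d0 (eps / K)).
  { apply Rmin_pos; [apply cond_pos | apply Rdiv_lt_0_compat; [apply cond_pos | exact HK]]. }
  exists (mkposreal _ Hd); simpl. intros u v Hu Hv.
  specialize (HD u v (Rlt_le_trans _ _ _ Hu (Rmin_l _ _)) (Rlt_le_trans _ _ _ Hv (Rmin_l _ _))).
  rewrite DL_pol_1 in HD.
  set (m := Rmax (Rabs (u - a)) (Rabs (v - b))) in *.
  assert (Hm0 : 0 <= m) by (unfold m; eapply Rle_trans; [apply Rabs_pos | apply Rmax_l]).
  assert (HmK : m * K <= eps).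
  { assert (m < eps / K).
    { apply Rmax_lub_lt; eapply Rlt_le_trans; eauto using Rmin_r. }
    apply Rmult_lt_compat_r with (r := K) in H; [|exact HK].
    unfold Rdiv in H; rewrite Rmult_assoc, Rinv_l in H; lra. }
  replace (f u v - f a b - _) with
    (f u v - (f a b + Derive (fun s => f s b) a * (u - a) + Derive (fun s => f a s) b * (v - b)))
    by ring.
  simpl in HD. nra.
Qed.

Lemma is_derive_comp_2d U f (u v : R -> R) t du dv : open2 U -> C2k 2 U f -> U (u t) (v t) ->
  is_derive u t du -> is_derive v t dv ->
  is_derive (fun s => f (u s) (v s)) t
    (Derive (fun s => f s (v t)) (u t) * du + Derive (fun s => f (u t) s) (v t) * dv).
Proof.
  intros HU Hf Ht Hu Hv. apply is_derive_Reals, derivable_pt_lim_comp_2d.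
  - exact (C2k_differentiable_pt_lim U f _ _ HU Hf Ht).
  - apply is_derive_Reals, Hu.
  - apply is_derive_Reals, Hv.
Qed.

(** * Functions differentiable up to order [n] on an interval *)

Lemma locally_inI t0 t1 t : inI t0 t1 t -> locally t (inI t0 t1).
Proof. exact (open_and _ _ (open_gt t0) (open_lt t1) t). Qed.

Lemma inI_midpoint t0 t1 : t0 < t1 -> inI t0 t1 ((t0 + t1) / 2).
Proof. intros H. unfold inI. lra. Qed.


Section DerivableUpTo.

Variables t0 t1 : R.

Definition ex_derive_upto (n : nat) (f : R -> R) : Prop :=
  forall k, (k < n)%nat -> forall t, inI t0 t1 t -> ex_derive (Derive_n f k) t.

Lemma ex_derive_upto_ext n f g :
  (forall t, inI t0 t1 t -> f t = g t) -> ex_derive_upto n f -> ex_derive_upto n g.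
Proof.
  intros Efg Hf k Hk t Ht.
  apply ex_derive_ext_loc with (Derive_n f k); [|exact (Hf k Hk t Ht)].
  apply filter_imp with (inI t0 t1); [|exact (locally_inI _ _ _ Ht)].
  intros s Hs. apply Derive_n_ext_loc.
  exact (filter_imp _ _ Efg (locally_inI _ _ _ Hs)).
Qed.

Lemma Derive_n_S_Derive f k s : Derive_n f (S k) s = Derive_n (Derive f) k s.
Proof.
  change (Derive f) with (Derive_n f 1).
  rewrite Derive_n_comp. f_equal. lia.
Qed.

Lemma ex_derive_upto_S n f : (forall t, inI t0 t1 t -> ex_derive f t) ->
  ex_derive_upto n (Derive f) -> ex_derive_upto (S n) f.
Proof.
  intros Hf HDf [|k] Hk t Ht; [exact (Hf t Ht)|].
  apply ex_derive_ext with (Derive_n (Derive f) k).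
  - intros s. symmetry. apply Derive_n_S_Derive.
  - apply HDf; [lia | exact Ht].
Qed.

Lemma ex_derive_upto_Derive n f : ex_derive_upto (S n) f -> ex_derive_upto n (Derive f).
Proof.
  intros Hf k Hk t Ht.
  apply ex_derive_ext with (Derive_n f (S k)); [exact (Derive_n_S_Derive f k)|].
  apply Hf; [lia | exact Ht].
Qed.

Lemma ex_derive_upto_ex_derive n f t :
  ex_derive_upto (S n) f -> inI t0 t1 t -> ex_derive f t.
Proof. intros Hf Ht. exact (Hf O (Nat.lt_0_succ n) t Ht). Qed.

Lemma ex_derive_upto_S_le n f : ex_derive_upto (S n) f -> ex_derive_upto n f.
Proof. intros Hf k Hk. apply Hf. lia. Qed.

Lemma ex_derive_upto_plus n : forall f g,
  ex_derive_upto n f -> ex_derive_upto n g -> ex_derive_upto n (fun s => f s + g s).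
Proof.
  induction n as [|n IH]; intros f g Hf Hg; [intros k Hk; lia|].
  assert (Exf := fun t => ex_derive_upto_ex_derive n f t Hf).
  assert (Exg := fun t => ex_derive_upto_ex_derive n g t Hg).
  apply ex_derive_upto_S.
  - intros t Ht. exact (ex_derive_plus f g t (Exf t Ht) (Exg t Ht)).
  - apply ex_derive_upto_ext with (fun s => Derive f s + Derive g s).
    + intros t Ht. symmetry. exact (Derive_plus f g t (Exf t Ht) (Exg t Ht)).
    + apply IH; apply ex_derive_upto_Derive; assumption.
Qed.

Lemma ex_derive_upto_mult n : forall f g,
  ex_derive_upto n f -> ex_derive_upto n g -> ex_derive_upto n (fun s => f s * g s).
Proof.
  induction n as [|n IH]; intros f g Hf Hg; [intros k Hk; lia|].
  assert (Exf := fun t => ex_derive_upto_ex_derive n f t Hf).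
  assert (Exg := fun t => ex_derive_upto_ex_derive n g t Hg).
  apply ex_derive_upto_S.
  - intros t Ht. exact (ex_derive_mult f g t (Exf t Ht) (Exg t Ht)).
  - apply ex_derive_upto_ext with (fun s => Derive f s * g s + f s * Derive g s).
    + intros t Ht. symmetry. exact (Derive_mult f g t (Exf t Ht) (Exg t Ht)).
    + apply ex_derive_upto_plus; apply IH;
        auto using ex_derive_upto_Derive, ex_derive_upto_S_le.
Qed.

Lemma smooth1_ex_derive_upto n f : smooth1 (inI t0 t1) f -> ex_derive_upto n f.
Proof. intros Hf k _ t Ht. exact (Hf (S k) t Ht). Qed.

Lemma ex_derive_upto_comp_2d U (u v : R -> R) : open2 U ->
  (forall t, inI t0 t1 t -> U (u t) (v t)) ->
  forall n f, C2k (S (S n)) U f -> ex_derive_upto n u -> ex_derive_upto n v ->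
  ex_derive_upto n (fun t => f (u t) (v t)).
Proof.
  intros HU Huv n. induction n as [|n IH]; intros f Hf Hu Hv; [intros k Hk; lia|].
  assert (Hd : forall t, inI t0 t1 t -> is_derive (fun s => f (u s) (v s)) t
    (Derive (fun s => f s (v t)) (u t) * Derive u t
     + Derive (fun s => f (u t) s) (v t) * Derive v t)).
  { intros t Ht. apply (is_derive_comp_2d U).
    - exact HU.
    - exact (C2k_le U (S (S (S n))) 2 f ltac:(lia) Hf).
    - exact (Huv t Ht).
    - exact (Derive_correct _ _ (ex_derive_upto_ex_derive n u t Hu Ht)).
    - exact (Derive_correct _ _ (ex_derive_upto_ex_derive n v t Hv Ht)). }
  apply ex_derive_upto_S; [intros t Ht; eexists; exact (Hd t Ht)|].
  apply ex_derive_upto_ext with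
    (fun t => (fun a b => Derive (fun s => f s b) a) (u t) (v t) * Derive u t
            + (fun a b => Derive (fun s => f a s) b) (u t) (v t) * Derive v t).
  - intros t Ht. symmetry. exact (is_derive_unique _ _ _ (Hd t Ht)).
  - destruct Hf as [_ [_ [Hfu Hfv]]].
    assert (Hu' := ex_derive_upto_S_le _ _ Hu). assert (Hv' := ex_derive_upto_S_le _ _ Hv).
    apply ex_derive_upto_plus; apply ex_derive_upto_mult.
    + exact (IH _ Hfu Hu' Hv').
    + exact (ex_derive_upto_Derive _ _ Hu).
    + exact (IH _ Hfv Hu' Hv').
    + exact (ex_derive_upto_Derive _ _ Hv).
Qed.

End DerivableUpTo.

(** * Vector algebra in R^3 *)

Lemma V3_eq (a b : V3) : vx a = vx b -> vy a = vy b -> vz a = vz b -> a = b.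
Proof. destruct a as [[a1 a2] a3], b as [[b1 b2] b3]. cbv. intros -> -> ->. reflexivity. Qed.

Section Components.
Variables (a b c : V3) (k : R) (F : R -> V3) (t : R).
Lemma vx_vzero : vx vzero = 0. Proof. reflexivity. Qed.
Lemma vy_vzero : vy vzero = 0. Proof. reflexivity. Qed.
Lemma vz_vzero : vz vzero = 0. Proof. reflexivity. Qed.
Lemma vx_vadd : vx (vadd a b) = vx a + vx b. Proof. reflexivity. Qed.
Lemma vy_vadd : vy (vadd a b) = vy a + vy b. Proof. reflexivity. Qed.
Lemma vz_vadd : vz (vadd a b) = vz a + vz b. Proof. reflexivity. Qed.
Lemma vx_vsub : vx (vsub a b) = vx a - vx b. Proof. reflexivity. Qed.
Lemma vy_vsub : vy (vsub a b) = vy a - vy b. Proof. reflexivity. Qed.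
Lemma vz_vsub : vz (vsub a b) = vz a - vz b. Proof. reflexivity. Qed.
Lemma vx_vscale : vx (vscale k a) = k * vx a. Proof. reflexivity. Qed.
Lemma vy_vscale : vy (vscale k a) = k * vy a. Proof. reflexivity. Qed.
Lemma vz_vscale : vz (vscale k a) = k * vz a. Proof. reflexivity. Qed.
Lemma vx_cross : vx (cross a b) = vy a * vz b - vz a * vy b. Proof. reflexivity. Qed.
Lemma vy_cross : vy (cross a b) = vz a * vx b - vx a * vz b. Proof. reflexivity. Qed.
Lemma vz_cross : vz (cross a b) = vx a * vy b - vy a * vx b. Proof. reflexivity. Qed.
Lemma vx_vD : vx (vD F t) = Derive (fun s => vx (F s)) t. Proof. reflexivity. Qed.
Lemma vy_vD : vy (vD F t) = Derive (fun s => vy (F s)) t. Proof. reflexivity. Qed.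
Lemma vz_vD : vz (vD F t) = Derive (fun s => vz (F s)) t. Proof. reflexivity. Qed.
Lemma dotE : dot a b = vx a * vx b + vy a * vy b + vz a * vz b. Proof. reflexivity. Qed.
Lemma det3E : det3 a b c = dot a (cross b c). Proof. reflexivity. Qed.
End Components.

Hint Rewrite vx_vzero vy_vzero vz_vzero vx_vadd vy_vadd vz_vadd
  vx_vsub vy_vsub vz_vsub vx_vscale vy_vscale vz_vscale vx_cross vy_cross vz_cross
  vx_vD vy_vD vz_vD det3E dotE : vec.

Ltac vsimpl := autorewrite with vec.

Ltac vring := apply V3_eq; vsimpl; ring.

Lemma dot_self_eq0 (a : V3) : dot a a = 0 -> a = vzero.
Proof.
  destruct a as [[x y] z]. unfold dot, vx, vy, vz; simpl. intros H.
  assert (x = 0) by nra. assert (y = 0) by nra. assert (z = 0) by nra. subst. reflexivity.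
Qed.

Lemma dot_self_nonneg (a : V3) : 0 <= dot a a.
Proof. vsimpl. nra. Qed.

Lemma dot_self_pos (a : V3) : a <> vzero -> 0 < dot a a.
Proof.
  intros Ha. destruct (Rle_lt_or_eq_dec _ _ (dot_self_nonneg a)) as [Hpos|Hzero]; [exact Hpos|].
  exfalso. apply Ha, dot_self_eq0. auto.
Qed.

Lemma vnorm_pos (a : V3) : a <> vzero -> 0 < vnorm a.
Proof. intros Ha. apply sqrt_lt_R0, dot_self_pos, Ha. Qed.

Lemma vnorm_mul_self (a : V3) : vnorm a * vnorm a = dot a a.
Proof. exact (sqrt_sqrt _ (dot_self_nonneg a)). Qed.

Lemma vsub_eq0 (a b : V3) : vsub a b = vzero -> a = b.
Proof.
  intros E. apply V3_eq;
    [apply (f_equal vx) in E | apply (f_equal vy) in E | apply (f_equal vz) in E];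
    revert E; vsimpl; lra.
Qed.

Lemma vscale_inj k k' (a : V3) : a <> vzero -> vscale k a = vscale k' a -> k = k'.
Proof.
  intros Ha E. assert (Hpos := dot_self_pos a Ha).
  assert (Hk : (k - k') * dot a a = 0).
  { transitivity (dot a (vscale k a) - dot a (vscale k' a)); [vsimpl; ring|].
    rewrite E. ring. }
  destruct (Rmult_integral _ _ Hk); lra.
Qed.

Lemma coords_unique (P Q : V3) a b a' b' : cross P Q <> vzero ->
  vadd (vscale a P) (vscale b Q) = vadd (vscale a' P) (vscale b' Q) -> a = a' /\ b = b'.
Proof.
  intros HPQ E. split.
  - apply (vscale_inj a a' (cross P Q) HPQ).
    transitivity (cross (vadd (vscale a P) (vscale b Q)) Q); [vring|].
    rewrite E. vring.
  - apply (vscale_inj b b' (cross P Q) HPQ).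
    transitivity (cross P (vadd (vscale a P) (vscale b Q))); [vring|].
    rewrite E. vring.
Qed.

Lemma cross_frame_identity (N w a : V3) :
  vadd (vadd (vscale (dot a (cross N w)) w) (vscale (- dot w a) (cross N w)))
       (vscale (dot w w) (cross N a))
  = vscale (dot N w) (cross w a).
Proof. vring. Qed.

Definition plane_foot (q a n : V3) : V3 := vsub q (vscale (dot (vsub q a) n) n).

Lemma sphere_plane_section (q a n x : V3) rho2 : dot n n = 1 ->
  dot (vsub x q) (vsub x q) = rho2 -> dot (vsub x a) n = 0 ->
  dot (vsub x (plane_foot q a n)) n = 0 /\
  dot (vsub x (plane_foot q a n)) (vsub x (plane_foot q a n)) = rho2 - dot (vsub q a) n ^ 2.
Proof.
  intros Hn Hq Ha. unfold plane_foot. set (d := dot (vsub q a) n). split.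
  - transitivity (dot (vsub x a) n - d + d * dot n n); [unfold d; vsimpl; ring|].
    rewrite Ha, Hn. ring.
  - transitivity (dot (vsub x q) (vsub x q) + 2 * d * (dot (vsub x a) n - d) + d * d * dot n n);
      [unfold d; vsimpl; ring|].
    rewrite Hq, Ha, Hn. ring.
Qed.

Definition normalize (a : V3) : V3 := vscale (/ vnorm a) a.

Lemma dot_normalize_self (a : V3) : a <> vzero -> dot (normalize a) (normalize a) = 1.
Proof.
  intros Ha. assert (HL := vnorm_pos a Ha). unfold normalize.
  transitivity (/ vnorm a * / vnorm a * dot a a); [vsimpl; ring|].
  rewrite <- vnorm_mul_self. field. lra.
Qed.

(** * Derivatives of curves in R^3 *)

Lemma is_derive_eq (f : R -> R) (t l l' : R) : is_derive f t l -> l = l' -> is_derive f t l'.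
Proof. intros H <-. exact H. Qed.

Definition is_vderive (F : R -> V3) (t : R) (F' : V3) : Prop :=
  is_derive (fun s => vx (F s)) t (vx F') /\ is_derive (fun s => vy (F s)) t (vy F') /\
  is_derive (fun s => vz (F s)) t (vz F').

Lemma is_vderive_eq F t (F' F'' : V3) : is_vderive F t F' -> F' = F'' -> is_vderive F t F''.
Proof. intros H <-. exact H. Qed.

Lemma is_vderive_unique F t F' : is_vderive F t F' -> vD F t = F'.
Proof. intros [Hx [Hy Hz]]. apply V3_eq; apply is_derive_unique; assumption. Qed.

Lemma vD_correct F t : ex_derive (fun s => vx (F s)) t -> ex_derive (fun s => vy (F s)) t ->
  ex_derive (fun s => vz (F s)) t -> is_vderive F t (vD F t).
Proof. intros Hx Hy Hz. split; [|split]; apply Derive_correct; assumption. Qed.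

Lemma vDn_correct F n t :
  ex_derive (Derive_n (fun s => vx (F s)) n) t -> ex_derive (Derive_n (fun s => vy (F s)) n) t ->
  ex_derive (Derive_n (fun s => vz (F s)) n) t -> is_vderive (vDn n F) t (vDn (S n) F t).
Proof. intros Hx Hy Hz. split; [|split]; apply Derive_correct; assumption. Qed.

Lemma is_vderive_const (a : V3) t : is_vderive (fun _ => a) t vzero.
Proof. split; [|split]; exact (is_derive_const _ t). Qed.

Lemma is_vderive_sub F G t F' G' : is_vderive F t F' -> is_vderive G t G' ->
  is_vderive (fun s => vsub (F s) (G s)) t (vsub F' G').
Proof.
  intros [Fx [Fy Fz]] [Gx [Gy Gz]].
  exact (conj (is_derive_minus _ _ _ _ _ Fx Gx)
           (conj (is_derive_minus _ _ _ _ _ Fy Gy) (is_derive_minus _ _ _ _ _ Fz Gz))).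
Qed.

Lemma is_vderive_add F G t F' G' : is_vderive F t F' -> is_vderive G t G' ->
  is_vderive (fun s => vadd (F s) (G s)) t (vadd F' G').
Proof.
  intros [Fx [Fy Fz]] [Gx [Gy Gz]].
  exact (conj (is_derive_plus _ _ _ _ _ Fx Gx)
           (conj (is_derive_plus _ _ _ _ _ Fy Gy) (is_derive_plus _ _ _ _ _ Fz Gz))).
Qed.

Lemma is_vderive_scale f F t f' F' : is_derive f t f' -> is_vderive F t F' ->
  is_vderive (fun s => vscale (f s) (F s)) t (vadd (vscale f' (F t)) (vscale (f t) F')).
Proof. intros Hf [Fx [Fy Fz]]. split; [|split]; apply Derive.is_derive_mult; assumption. Qed.

Lemma is_vderive_cross F G t F' G' : is_vderive F t F' -> is_vderive G t G' ->
  is_vderive (fun s => cross (F s) (G s)) t (vadd (cross F' (G t)) (cross (F t) G')).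
Proof.
  intros [Fx [Fy Fz]] [Gx [Gy Gz]].
  pose (dmul := Derive.is_derive_mult).
  split; [|split]; eapply is_derive_eq.
  - exact (is_derive_minus _ _ _ _ _ (dmul _ _ _ _ _ Fy Gz) (dmul _ _ _ _ _ Fz Gy)).
  - unfold minus, plus, opp; simpl; vsimpl; ring.
  - exact (is_derive_minus _ _ _ _ _ (dmul _ _ _ _ _ Fz Gx) (dmul _ _ _ _ _ Fx Gz)).
  - unfold minus, plus, opp; simpl; vsimpl; ring.
  - exact (is_derive_minus _ _ _ _ _ (dmul _ _ _ _ _ Fx Gy) (dmul _ _ _ _ _ Fy Gx)).
  - unfold minus, plus, opp; simpl; vsimpl; ring.
Qed.

Lemma is_derive_dot F G t F' G' : is_vderive F t F' -> is_vderive G t G' ->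
  is_derive (fun s => dot (F s) (G s)) t (dot F' (G t) + dot (F t) G').
Proof.
  intros [Fx [Fy Fz]] [Gx [Gy Gz]].
  eapply is_derive_eq;
    [ exact (is_derive_plus _ _ _ _ _
               (is_derive_plus _ _ _ _ _ (Derive.is_derive_mult _ _ _ _ _ Fx Gx)
                                         (Derive.is_derive_mult _ _ _ _ _ Fy Gy))
               (Derive.is_derive_mult _ _ _ _ _ Fz Gz))
    | unfold minus, plus, opp; simpl; vsimpl; ring ].
Qed.

Lemma is_derive_inv_vnorm W t W' : is_vderive W t W' -> W t <> vzero ->
  is_derive (fun s => / vnorm (W s)) t (- dot (W t) W' / vnorm (W t) ^ 3).
Proof.
  intros HW Hn.
  assert (HL := vnorm_pos _ Hn). assert (HLL := vnorm_mul_self (W t)).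
  assert (Hsqrt := is_derive_sqrt _ _ _ (is_derive_dot W W t W' W' HW HW) (dot_self_pos _ Hn)).
  eapply is_derive_eq; [exact (is_derive_inv _ _ _ Hsqrt (Rgt_not_eq _ _ HL))|].
  cbv beta. fold (vnorm (W t)). replace (dot W' (W t)) with (dot (W t) W') by (vsimpl; ring).
  field. lra.
Qed.

(* The derivative of [a / |a|] in the direction [a']. *)
Definition normalize_deriv (a a' : V3) : V3 :=
  vsub (vscale (/ vnorm a) a') (vscale (dot a a' / vnorm a ^ 3) a).

Lemma normalize_deriv_linear a b c P Q : normalize_deriv a (vadd (vscale b P) (vscale c Q)) =
  vadd (vscale b (normalize_deriv a P)) (vscale c (normalize_deriv a Q)).
Proof. unfold normalize_deriv. apply V3_eq; vsimpl; unfold Rdiv; ring. Qed.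

Lemma is_vderive_normalize F t F' : is_vderive F t F' -> F t <> vzero ->
  is_vderive (fun s => normalize (F s)) t (normalize_deriv (F t) F').
Proof.
  intros HF Hn.
  eapply is_vderive_eq; [exact (is_vderive_scale _ _ _ _ _ (is_derive_inv_vnorm F t F' HF Hn) HF)|].
  unfold normalize_deriv. apply V3_eq; vsimpl; field; exact (Rgt_not_eq _ _ (vnorm_pos _ Hn)).
Qed.

Lemma is_derive_const_inI (f : R -> R) t0 t1 : (forall t, inI t0 t1 t -> is_derive f t 0) ->
  forall a b, inI t0 t1 a -> inI t0 t1 b -> f a = f b.
Proof.
  intros Hf.
  assert (Hlt : forall a b, inI t0 t1 a -> inI t0 t1 b -> a < b -> f a = f b).
  { intros a b [Ha0 Ha1] [Hb0 Hb1] Hab.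
    destruct (MVT_cor2 f (fun _ => 0) a b Hab) as [c [Hc _]]; [|lra].
    intros c Hc. apply is_derive_Reals, Hf. split; lra. }
  intros a b Ha Hb. destruct (Rtotal_order a b) as [Hab|[<-|Hab]]; auto.
  symmetry. auto.
Qed.

Lemma is_vderive_const_inI (F : R -> V3) t0 t1 : (forall t, inI t0 t1 t -> is_vderive F t vzero) ->
  forall a b, inI t0 t1 a -> inI t0 t1 b -> F a = F b.
Proof.
  intros HF a b Ha Hb. apply V3_eq;
    [ apply (is_derive_const_inI (fun s => vx (F s)) t0 t1)
    | apply (is_derive_const_inI (fun s => vy (F s)) t0 t1)
    | apply (is_derive_const_inI (fun s => vz (F s)) t0 t1) ];
    auto; intros t Ht; apply (HF t Ht).
Qed.

Lemma is_vderive_ext_loc F G t F' :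
  locally t (fun s => F s = G s) -> is_vderive F t F' -> is_vderive G t F'.
Proof.
  intros Hloc [Hx [Hy Hz]].
  exact (conj (is_derive_ext_loc _ _ _ _ (filter_imp _ _ (fun s E => f_equal vx E) Hloc) Hx)
          (conj (is_derive_ext_loc _ _ _ _ (filter_imp _ _ (fun s E => f_equal vy E) Hloc) Hy)
                (is_derive_ext_loc _ _ _ _ (filter_imp _ _ (fun s E => f_equal vz E) Hloc) Hz))).
Qed.

Lemma is_vderive_const_inI_eq0 (F : R -> V3) P t0 t1 t F' :
  (forall s, inI t0 t1 s -> F s = P) -> inI t0 t1 t -> is_vderive F t F' -> F' = vzero.
Proof.
  intros HF Ht HF'.
  assert (Hloc : locally t (fun s => F s = P)) by exact (filter_imp _ _ HF (locally_inI _ _ _ Ht)).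
  rewrite <- (is_vderive_unique _ _ _ (is_vderive_ext_loc _ _ _ _ Hloc HF')).
  exact (is_vderive_unique _ _ _ (is_vderive_const P t)).
Qed.

(** * The unit normal of a parametrized surface along a curve *)

Definition smooth_map (U : R -> R -> Prop) (X : R -> R -> V3) : Prop :=
  smooth2 U (fun a b => vx (X a b)) /\ smooth2 U (fun a b => vy (X a b)) /\
  smooth2 U (fun a b => vz (X a b)).

Lemma smooth2_Derive_u U f : smooth2 U f -> smooth2 U (fun a b => Derive (fun s => f s b) a).
Proof. intros Hf k. exact (proj1 (proj2 (proj2 (Hf (S k))))). Qed.

Lemma smooth2_Derive_v U f : smooth2 U f -> smooth2 U (fun a b => Derive (fun s => f a s) b).
Proof. intros Hf k. exact (proj2 (proj2 (proj2 (Hf (S k))))). Qed.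

Lemma smooth2_ex_derive U f a b : smooth2 U f -> U a b ->
  ex_derive (fun s => f s b) a /\ ex_derive (fun s => f a s) b.
Proof. intros Hf Hab. exact (proj1 (proj2 (Hf 1%nat)) a b Hab). Qed.

Lemma smooth_map_Xu U X : smooth_map U X -> smooth_map U (Xu X).
Proof. intros [Hx [Hy Hz]]. split; [|split]; apply smooth2_Derive_u; assumption. Qed.

Lemma smooth_map_Xv U X : smooth_map U X -> smooth_map U (Xv X).
Proof. intros [Hx [Hy Hz]]. split; [|split]; apply smooth2_Derive_v; assumption. Qed.

Lemma is_vderive_Xu U X a b : smooth_map U X -> U a b -> is_vderive (fun s => X s b) a (Xu X a b).
Proof.
  intros [Hx [Hy Hz]] Hab. apply vD_correct; [
    exact (proj1 (smooth2_ex_derive _ _ _ _ Hx Hab)) |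
    exact (proj1 (smooth2_ex_derive _ _ _ _ Hy Hab)) |
    exact (proj1 (smooth2_ex_derive _ _ _ _ Hz Hab)) ].
Qed.

Lemma is_vderive_Xv U X a b : smooth_map U X -> U a b -> is_vderive (fun s => X a s) b (Xv X a b).
Proof.
  intros [Hx [Hy Hz]] Hab. apply vD_correct; [
    exact (proj2 (smooth2_ex_derive _ _ _ _ Hx Hab)) |
    exact (proj2 (smooth2_ex_derive _ _ _ _ Hy Hab)) |
    exact (proj2 (smooth2_ex_derive _ _ _ _ Hz Hab)) ].
Qed.

Lemma is_vderive_comp_smooth_map U X (u v : R -> R) (t du dv : R) :
  open2 U -> smooth_map U X -> U (u t) (v t) -> is_derive u t du -> is_derive v t dv ->
  is_vderive (fun s => X (u s) (v s)) t
    (vadd (vscale du (Xu X (u t) (v t))) (vscale dv (Xv X (u t) (v t)))).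
Proof.
  intros HU [Hx [Hy Hz]] Ht Hu Hv. unfold Xu, Xv.
  split; [|split]; eapply is_derive_eq.
  - exact (is_derive_comp_2d U _ u v t du dv HU (Hx 2%nat) Ht Hu Hv).
  - vsimpl; ring.
  - exact (is_derive_comp_2d U _ u v t du dv HU (Hy 2%nat) Ht Hu Hv).
  - vsimpl; ring.
  - exact (is_derive_comp_2d U _ u v t du dv HU (Hz 2%nat) Ht Hu Hv).
  - vsimpl; ring.
Qed.

Section UnitNormal.

Variables (U : R -> R -> Prop) (X : R -> R -> V3).
Hypothesis HX : smooth_map U X.

Lemma Nu_eq a b : U a b -> cross (Xu X a b) (Xv X a b) <> vzero ->
  Nu X a b = normalize_deriv (cross (Xu X a b) (Xv X a b))
    (vadd (cross (Xu (Xu X) a b) (Xv X a b)) (cross (Xu X a b) (Xu (Xv X) a b))).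
Proof.
  intros Hab Hn. apply is_vderive_unique.
  apply (is_vderive_normalize (fun s => cross (Xu X s b) (Xv X s b))); [|exact Hn].
  apply (is_vderive_cross (fun s => Xu X s b) (fun s => Xv X s b)).
  - exact (is_vderive_Xu U (Xu X) a b (smooth_map_Xu U X HX) Hab).
  - exact (is_vderive_Xu U (Xv X) a b (smooth_map_Xv U X HX) Hab).
Qed.

Lemma Nv_eq a b : U a b -> cross (Xu X a b) (Xv X a b) <> vzero ->
  Nv X a b = normalize_deriv (cross (Xu X a b) (Xv X a b))
    (vadd (cross (Xv (Xu X) a b) (Xv X a b)) (cross (Xu X a b) (Xv (Xv X) a b))).
Proof.
  intros Hab Hn. apply is_vderive_unique.
  apply (is_vderive_normalize (fun s => cross (Xu X a s) (Xv X a s))); [|exact Hn].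
  apply (is_vderive_cross (fun s => Xu X a s) (fun s => Xv X a s)).
  - exact (is_vderive_Xv U (Xu X) a b (smooth_map_Xu U X HX) Hab).
  - exact (is_vderive_Xv U (Xv X) a b (smooth_map_Xv U X HX) Hab).
Qed.

(* [N] is only known to be differentiable in each variable, so the chain rule is
   applied to [Xu x Xv] (whose components are smooth) and then normalized. *)
Lemma is_vderive_Nrm_comp (u v : R -> R) (t du dv : R) : open2 U -> U (u t) (v t) ->
  cross (Xu X (u t) (v t)) (Xv X (u t) (v t)) <> vzero ->
  is_derive u t du -> is_derive v t dv ->
  is_vderive (fun s => Nrm X (u s) (v s)) t
    (vadd (vscale du (Nu X (u t) (v t))) (vscale dv (Nv X (u t) (v t)))).
Proof.
  intros HU Ht Hn Hu Hv.
  rewrite (Nu_eq _ _ Ht Hn), (Nv_eq _ _ Ht Hn), <- normalize_deriv_linear.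
  eapply is_vderive_eq.
  - apply (is_vderive_normalize (fun s => cross (Xu X (u s) (v s)) (Xv X (u s) (v s))));
      [|exact Hn].
    apply (is_vderive_cross (fun s => Xu X (u s) (v s)) (fun s => Xv X (u s) (v s))).
    + exact (is_vderive_comp_smooth_map U (Xu X) u v t du dv HU (smooth_map_Xu U X HX) Ht Hu Hv).
    + exact (is_vderive_comp_smooth_map U (Xv X) u v t du dv HU (smooth_map_Xv U X HX) Ht Hu Hv).
  - f_equal. vring.
Qed.

End UnitNormal.

(** * Torsion-free curves are planar *)

Lemma normalize_deriv_binormal (w a b : V3) : cross w a <> vzero ->
  normalize_deriv (cross w a) (vadd (cross a a) (cross w b)) =
  vscale (det3 w a b / vnorm (cross w a) ^ 3) (cross w (cross w a)).
Proof.
  intros Hn. assert (HL := vnorm_pos _ Hn). assert (HLL := vnorm_mul_self (cross w a)).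
  set (L := vnorm (cross w a)) in *. unfold normalize_deriv. fold L.
  transitivity (vscale (/ L ^ 3)
    (vsub (vscale (L * L) (vadd (cross a a) (cross w b)))
          (vscale (dot (cross w a) (vadd (cross a a) (cross w b))) (cross w a)))).
  { apply V3_eq; vsimpl; field; lra. }
  rewrite HLL. apply V3_eq; vsimpl; field; lra.
Qed.

Section TorsionFreeCurve.

Variables (g : R -> V3) (t0 t1 : R).
Hypothesis Ht01 : t0 < t1.
Hypothesis Hg1 : forall t, inI t0 t1 t -> is_vderive g t (vD g t).
Hypothesis Hg2 : forall t, inI t0 t1 t -> is_vderive (vD g) t (vDn 2 g t).
Hypothesis Hg3 : forall t, inI t0 t1 t -> is_vderive (vDn 2 g) t (vDn 3 g t).
Hypothesis Hbireg : forall t, inI t0 t1 t -> cross (vD g t) (vDn 2 g t) <> vzero.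
Hypothesis Htor : forall t, inI t0 t1 t -> torsion g t = 0.

Lemma torsion_free_det3_eq0 t : inI t0 t1 t -> det3 (vD g t) (vDn 2 g t) (vDn 3 g t) = 0.
Proof.
  intros Ht. assert (E := Htor t Ht). unfold torsion in E.
  change (vDn 1 g t) with (vD g t) in E.
  assert (HB := vnorm_pos _ (Hbireg t Ht)).
  unfold Rdiv in E. destruct (Rmult_integral _ _ E) as [E'|E']; [exact E'|].
  exfalso. revert E'. apply Rinv_neq_0_compat, pow_nonzero. lra.
Qed.

Lemma torsion_free_planar : exists a n, dot n n = 1 /\
  forall t, inI t0 t1 t -> dot (vsub (g t) a) n = 0.
Proof.
  set (tm := (t0 + t1) / 2). assert (Htm := inI_midpoint t0 t1 Ht01).
  set (binormal := fun t => normalize (cross (vD g t) (vDn 2 g t))).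
  assert (Hconst : forall t, inI t0 t1 t -> binormal t = binormal tm).
  { intros t Ht. apply (is_vderive_const_inI binormal t0 t1); auto. intros s Hs.
    eapply is_vderive_eq.
    - apply is_vderive_normalize; [|exact (Hbireg s Hs)].
      exact (is_vderive_cross _ _ _ _ _ (Hg2 s Hs) (Hg3 s Hs)).
    - cbv beta.
      rewrite normalize_deriv_binormal, (torsion_free_det3_eq0 s Hs) by exact (Hbireg s Hs).
      unfold Rdiv. vring. }
  exists (g tm), (binormal tm).
  split; [exact (dot_normalize_self _ (Hbireg tm Htm))|].
  intros t Ht.
  transitivity (dot (vsub (g tm) (g tm)) (binormal tm)); [|vsimpl; ring].
  apply (is_derive_const_inI (fun s => dot (vsub (g s) (g tm)) (binormal tm)) t0 t1);
    [|exact Ht | exact Htm].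
  intros s Hs. eapply is_derive_eq.
  - exact (is_derive_dot _ _ _ _ _ (is_vderive_sub _ _ _ _ _ (Hg1 s Hs) (is_vderive_const (g tm) s))
                                   (is_vderive_const (binormal tm) s)).
  - rewrite <- (Hconst s Hs). unfold binormal, normalize. vsimpl. ring.
Qed.

End TorsionFreeCurve.

(** * Lines of curvature of constant geodesic curvature *)

Section LineOfCurvature.

Variables (U : R -> R -> Prop) (X : R -> R -> V3) (t0 t1 : R) (u v : R -> R) (c : R).
Hypothesis Hsurf : regular_surface U X.
Hypothesis Hcurve : curve_on U X t0 t1 u v.
Hypothesis Hloc : line_of_curvature X t0 t1 u v.
Hypothesis Hc : c <> 0.
Hypothesis Hgeod : forall t, inI t0 t1 t -> geod_curv X u v t = c.

Local Notation gamma := (gam X u v).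
Local Notation velocity := (vD (gam X u v)).
Local Notation accel := (vDn 2 (gam X u v)).
Local Notation normal t := (Nrm X (u t) (v t)).
Local Notation conormal t :=
  (vscale (/ vnorm (velocity t)) (cross (normal t) (velocity t))).

Let HU : open2 U := proj1 Hsurf.
Let HX : smooth_map U X.
Proof. pose proof (proj2 Hsurf) as [Hx [Hy [Hz _]]]. repeat split; assumption. Qed.
Let Hreg : forall a b, U a b -> cross (Xu X a b) (Xv X a b) <> vzero :=
  proj2 (proj2 (proj2 (proj2 Hsurf))).
Let Hin : forall t, inI t0 t1 t -> U (u t) (v t) := proj2 (proj2 (proj2 Hcurve)).
Let Ht01 : t0 < t1 := proj1 Hcurve.

Let is_derive_u t : inI t0 t1 t -> is_derive u t (Derive u t).
Proof. intros Ht. exact (Derive_correct _ _ (proj1 (proj2 Hcurve) 1%nat t Ht)). Qed.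
Let is_derive_v t : inI t0 t1 t -> is_derive v t (Derive v t).
Proof. intros Ht. exact (Derive_correct _ _ (proj1 (proj2 (proj2 Hcurve)) 1%nat t Ht)). Qed.

Lemma gam_ex_derive_n k t : (k < 3)%nat -> inI t0 t1 t ->
  ex_derive (Derive_n (fun s => vx (gamma s)) k) t /\
  ex_derive (Derive_n (fun s => vy (gamma s)) k) t /\
  ex_derive (Derive_n (fun s => vz (gamma s)) k) t.
Proof.
  pose proof (proj2 Hcurve) as [Hu [Hv _]]. pose proof HX as [Hx [Hy Hz]]. intros Hk Ht.
  assert (Hup : forall f, smooth2 U f -> ex_derive_upto t0 t1 3 (fun s => f (u s) (v s))).
  { intros f Hf. apply (ex_derive_upto_comp_2d t0 t1 U u v HU Hin 3 f (Hf 5%nat));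
      apply smooth1_ex_derive_upto; assumption. }
  split; [|split]; [apply (Hup _ Hx) | apply (Hup _ Hy) | apply (Hup _ Hz)]; assumption.
Qed.

Lemma is_vderive_gam t : inI t0 t1 t -> is_vderive gamma t (velocity t).
Proof.
  intros Ht. destruct (gam_ex_derive_n 0 t ltac:(lia) Ht) as [Hx [Hy Hz]].
  exact (vD_correct _ _ Hx Hy Hz).
Qed.

Lemma is_vderive_gam_vDn n t : (n < 3)%nat -> inI t0 t1 t ->
  is_vderive (vDn n gamma) t (vDn (S n) gamma t).
Proof.
  intros Hn Ht. destruct (gam_ex_derive_n n t Hn Ht) as [Hx [Hy Hz]].
  exact (vDn_correct _ _ _ Hx Hy Hz).
Qed.

Lemma is_vderive_velocity t : inI t0 t1 t -> is_vderive velocity t (accel t).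
Proof. intros Ht. exact (is_vderive_gam_vDn 1 t ltac:(lia) Ht). Qed.

Lemma velocity_eq t : inI t0 t1 t ->
  velocity t =
  vadd (vscale (Derive u t) (Xu X (u t) (v t))) (vscale (Derive v t) (Xv X (u t) (v t))).
Proof.
  intros Ht. apply is_vderive_unique.
  exact (is_vderive_comp_smooth_map U X u v t _ _ HU HX (Hin t Ht)
           (is_derive_u t Ht) (is_derive_v t Ht)).
Qed.

Lemma normal_rodrigues t : inI t0 t1 t ->
  exists k, is_vderive (fun s => normal s) t (vscale (- k) (velocity t)).
Proof.
  intros Ht. destruct (Hloc t Ht) as [_ [a [b [k [Ew EN]]]]].
  rewrite (velocity_eq t Ht) in Ew.
  destruct (coords_unique _ _ _ _ _ _ (Hreg _ _ (Hin t Ht)) Ew) as [<- <-].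
  exists k. rewrite <- EN.
  exact (is_vderive_Nrm_comp U X HX u v t _ _ HU (Hin t Ht) (Hreg _ _ (Hin t Ht))
           (is_derive_u t Ht) (is_derive_v t Ht)).
Qed.

Lemma normal_unit t : inI t0 t1 t -> dot (normal t) (normal t) = 1.
Proof. intros Ht. exact (dot_normalize_self _ (Hreg _ _ (Hin t Ht))). Qed.

Lemma normal_velocity_orth t : inI t0 t1 t -> dot (normal t) (velocity t) = 0.
Proof. intros Ht. rewrite (velocity_eq t Ht). unfold Nrm. vsimpl. ring. Qed.

Lemma geod_curv_eq t : inI t0 t1 t ->
  c = dot (accel t) (cross (normal t) (velocity t)) / vnorm (velocity t) ^ 3.
Proof. intros Ht. rewrite <- (Hgeod t Ht). reflexivity. Qed.

Lemma geod_numerator_neq0 t : inI t0 t1 t -> dot (accel t) (cross (normal t) (velocity t)) <> 0.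
Proof. intros Ht E. apply Hc. rewrite (geod_curv_eq t Ht), E. unfold Rdiv. ring. Qed.

Lemma velocity_neq0 t : inI t0 t1 t -> velocity t <> vzero.
Proof. intros Ht E. apply (geod_numerator_neq0 t Ht). rewrite E. vsimpl. ring. Qed.

Lemma velocity_cross_accel_neq0 t : inI t0 t1 t -> cross (velocity t) (accel t) <> vzero.
Proof.
  intros Ht E. apply (geod_numerator_neq0 t Ht).
  transitivity (dot (normal t) (cross (velocity t) (accel t))); [vsimpl; ring|].
  rewrite E. vsimpl. ring.
Qed.

Lemma is_vderive_sphere_center t : inI t0 t1 t ->
  is_vderive (fun s => vadd (vscale c (gamma s)) (conormal s)) t vzero.
Proof.
  intros Ht. destruct (normal_rodrigues t Ht) as [k Hk].
  assert (Hw := velocity_neq0 t Ht).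
  assert (Hacc := is_vderive_velocity t Ht).
  assert (HL := vnorm_pos _ Hw). assert (HLL := vnorm_mul_self (velocity t)).
  eapply is_vderive_eq.
  - apply is_vderive_add.
    + exact (is_vderive_scale (fun _ => c) gamma t 0 _ (is_derive_const c t) (is_vderive_gam t Ht)).
    + apply is_vderive_scale; [exact (is_derive_inv_vnorm _ _ _ Hacc Hw)|].
      exact (is_vderive_cross _ _ _ _ _ Hk Hacc).
  - rewrite (geod_curv_eq t Ht).
    set (L := vnorm (velocity t)) in *.
    transitivity (vscale (/ L ^ 3)
      (vadd (vadd (vscale (dot (accel t) (cross (normal t) (velocity t))) (velocity t))
                  (vscale (- dot (velocity t) (accel t)) (cross (normal t) (velocity t))))
            (vscale (L * L) (cross (normal t) (accel t))))).
    { apply V3_eq; vsimpl; field; lra. }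
    rewrite HLL, cross_frame_identity, (normal_velocity_orth t Ht). vring.
Qed.

Lemma sphere_center_eq : exists q, forall t, inI t0 t1 t ->
  vsub (gamma t) q = vscale (- / c) (conormal t).
Proof.
  set (tm := (t0 + t1) / 2). assert (Htm := inI_midpoint t0 t1 Ht01).
  exists (vscale (/ c) (vadd (vscale c (gamma tm)) (conormal tm))).
  intros t Ht.
  assert (E := is_vderive_const_inI _ t0 t1 is_vderive_sphere_center t tm Ht Htm).
  cbv beta in E. rewrite <- E.
  assert (HL := vnorm_pos _ (velocity_neq0 t Ht)).
  apply V3_eq; vsimpl; field; (split; [lra | exact Hc]).
Qed.

Lemma gam_on_orthogonal_sphere : exists q, forall t, inI t0 t1 t ->
  dot (vsub (gamma t) q) (vsub (gamma t) q) = / c * / c /\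
  dot (normal t) (vsub (gamma t) q) = 0.
Proof.
  destruct sphere_center_eq as [q Hq]. exists q. intros t Ht. rewrite (Hq t Ht).
  assert (HL := vnorm_pos _ (velocity_neq0 t Ht)).
  assert (HLL := vnorm_mul_self (velocity t)).
  set (L := vnorm (velocity t)) in *. split.
  - transitivity (/ c * / c * / L * / L * (dot (normal t) (normal t) * dot (velocity t) (velocity t)
                     - dot (normal t) (velocity t) * dot (normal t) (velocity t)));
      [vsimpl; ring|].
    rewrite (normal_unit t Ht), (normal_velocity_orth t Ht), <- HLL. field. lra.
  - vsimpl. ring.
Qed.

Lemma gam_dist_pos (p : V3) r2 :
  (forall t, inI t0 t1 t -> dot (vsub (gamma t) p) (vsub (gamma t) p) = r2) -> 0 < r2.
Proof.
  intros Hr. assert (Htm := inI_midpoint t0 t1 Ht01).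
  destruct (Rle_lt_or_eq_dec 0 r2) as [Hpos|Hzero]; [|exact Hpos|].
  - rewrite <- (Hr _ Htm). apply dot_self_nonneg.
  - exfalso. apply (velocity_neq0 _ Htm).
    refine (is_vderive_const_inI_eq0 gamma p t0 t1 _ _ _ Htm (is_vderive_gam _ Htm)).
    intros s Hs. apply vsub_eq0, dot_self_eq0. rewrite (Hr s Hs). auto.
Qed.

Hypothesis Htor : forall t, inI t0 t1 t -> torsion gamma t = 0.

Lemma gam_planar : exists a n, dot n n = 1 /\
  forall t, inI t0 t1 t -> dot (vsub (gamma t) a) n = 0.
Proof.
  exact (torsion_free_planar gamma t0 t1 Ht01 is_vderive_gam is_vderive_velocity
           (fun t Ht => is_vderive_gam_vDn 2 t ltac:(lia) Ht) velocity_cross_accel_neq0 Htor).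
Qed.

End LineOfCurvature.

Theorem lemma3p2 (U : R -> R -> Prop) (X : R -> R -> V3)
  (t0 t1 : R) (u v : R -> R) (c : R) :
  regular_surface U X ->
  curve_on U X t0 t1 u v ->
  line_of_curvature X t0 t1 u v ->
  c <> 0 ->
  (forall t, inI t0 t1 t -> geod_curv X u v t = c) ->
  (forall t, inI t0 t1 t -> torsion (gam X u v) t = 0) ->
  (* Gamma is part of a circle *)
  (exists (p n : V3) (r : R), 0 < r /\ n <> vzero /\
     forall t, inI t0 t1 t ->
       vnorm (vsub (gam X u v t) p) = r /\ dot (vsub (gam X u v t) p) n = 0) /\
  (* Sigma is orthogonal along Gamma to a sphere of radius 1/|c| *)
  (exists q : V3, forall t, inI t0 t1 t ->
       vnorm (vsub (gam X u v t) q) = / Rabs c /\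
       dot (Nrm X (u t) (v t)) (vsub (gam X u v t) q) = 0).
Proof.
  intros Hsurf Hcurve Hloc Hc Hgeod Htor.
  destruct (gam_on_orthogonal_sphere U X t0 t1 u v c Hsurf Hcurve Hloc Hc Hgeod) as [q Hsphere].
  destruct (gam_planar U X t0 t1 u v c Hsurf Hcurve Hc Hgeod Htor) as [a [n [Hn Hplane]]].
  set (r2 := / c * / c - dot (vsub q a) n ^ 2).
  assert (Hcircle : forall t, inI t0 t1 t ->
    dot (vsub (gam X u v t) (plane_foot q a n)) n = 0 /\
    dot (vsub (gam X u v t) (plane_foot q a n)) (vsub (gam X u v t) (plane_foot q a n)) = r2).
  { intros t Ht. exact (sphere_plane_section _ _ _ _ _ Hn (proj1 (Hsphere t Ht)) (Hplane t Ht)). }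
  assert (Hr2 : 0 < r2).
  { exact (gam_dist_pos U X t0 t1 u v c Hsurf Hcurve Hc Hgeod _ _
             (fun t Ht => proj2 (Hcircle t Ht))). }
  split.
  - exists (plane_foot q a n), n, (sqrt r2).
    split; [exact (sqrt_lt_R0 _ Hr2)|]. split.
    + intros En. rewrite En in Hn. revert Hn. vsimpl. lra.
    + intros t Ht. destruct (Hcircle t Ht) as [Hpl Hdist].
      split; [unfold vnorm; rewrite Hdist; reflexivity | exact Hpl].
  - exists q. intros t Ht. destruct (Hsphere t Ht) as [Hdist Horth].
    split; [|exact Horth].
    unfold vnorm. rewrite Hdist, <- Rabs_inv. exact (sqrt_Rsqr_abs (/ c)).
Qed.
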